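(* Let $D$ be a square-free integer, $p$ an odd prime, $k,\ell$ positive integers and $c_D$ a positive integer with $\gcd(c_D k, p) = 1$. Let $N = c_D k p^{\ell} - 1$ be an odd prime with $\left(\frac{D}{N}\right) = -1$, and let $w \in \mathcal{G}_N(D)$. Then one of the following holds: (i) $w^{c_D k} \equiv 1 \pmod{N}$; (ii) there exists an integer $j$ with $0 \le j < \ell$ such that $\Phi_p\bigl(w^{c_D k p^j}\bigr) \equiv 0 \pmod{N}$, where $\Phi_p$ is the $p$-th cyclotomic polynomial.
   Context: For an integer $n \ge 2$ and a square-free integer $D$: if $D \equiv 2,3 \pmod 4$, let $\mathcal{I}_n(D) = \{a + b\sqrt{D} : a,b \in \mathbb{Z}/n\mathbb{Z}\}$ (the ring $\mathbb{Z}[\sqrt D]/n\mathbb{Z}[\sqrt D]$) and $\mathcal{G}_n(D) = \{a + b\sqrt{D} \in \mathcal{I}_n(D) : a^2 - Db^2 \equiv 1 \pmod n\}$; if $D \equiv 1 \pmod 4$, let $\omega = \frac{1+\sqrt D}{2}$, $\mathcal{I}_n(D) = \{a + b\omega : a,b \in \mathbb{Z}/n\mathbb{Z}\}$ (the ring $\mathbb{Z}[\omega]/n\mathbb{Z}[\omega]$) and $\mathcal{G}_n(D) = \{a + b\omega \in \mathcal{I}_n(D) : a^2 + ab + \frac{1-D}{4} b^2 \equiv 1 \pmod n\}$. Powers are computed in $\mathcal{I}_n(D)$, a congruence $x \equiv y \pmod n$ for $x,y \in \mathcal{I}_n(D)$ means equality in $\mathcal{I}_n(D)$, and polynomials are evaluated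 in $\mathcal{I}_n(D)$. *)

From HB Require Import structures.
From mathcomp Require Import all_boot all_order all_algebra all_field.
Set Implicit Arguments. Unset Strict Implicit. Unset Printing Implicit Defensive.
Import Order.TTheory GRing.Theory Num.Theory.
Local Open Scope ring_scope.

Definition squarefree (D : int) : Prop :=
  forall d : int, (d * d %| D)%Z -> `|d| = 1.

Definition legendre (D : int) (N : nat) : int :=
  if (N%:Z %| D)%Z then 0
  else if [exists x : 'I_N, (N%:Z %| (x%:Z) ^+ 2 - D)%Z] then 1 else -1.

(* Elements a + b*sqrt D (D = 2,3 mod 4) or a + b*omega (D = 1 mod 4)
   of I_n(D), with a, b in Z/nZ (n >= 2). *)
Definition qI (n : nat) := ('Z_n * 'Z_n)%type.

Definition qone (n : nat) : qI n := (1, 0).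

Definition qmul (D : int) (n : nat) (x y : qI n) : qI n :=
  let: (a, b) := x in let: (c, d) := y in
  if (D %% 4)%Z == 1 then
    (* omega^2 = omega + (D-1)/4 *)
    (a * c + b * d * ((D - 1) %/ 4)%Z%:~R, a * d + b * c + b * d)
  else
    (a * c + D%:~R * b * d, a * d + b * c).

Definition qpow (D : int) (n : nat) (x : qI n) (m : nat) : qI n :=
  iter m (qmul D x) (qone n).

Definition qeval (D : int) (n : nat) (P : {poly int}) (x : qI n) : qI n :=
  \sum_(i < size P) (qpow D x i) *~ P`_i.

Definition inG (D : int) (n : nat) (x : qI n) : bool :=
  let: (a, b) := x in
  if (D %% 4)%Z == 1 then
    a ^+ 2 + a * b + ((1 - D) %/ 4)%Z%:~R * b ^+ 2 == 1
  else
    a ^+ 2 - D%:~R * b ^+ 2 == 1.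

(* Let F be a finite field with q elements, X^2 - tX - s irreducible over F, and
   Q = F[X]/(X^2 - tX - s) = F[ω].  The norm form of Q is anisotropic, so Q has no
   zero divisors.  The Frobenius x |-> x^q is a ring endomorphism of Q fixing F;
   ω^q is a root of X^2 - tX - s, and ω^q <> ω because ω - a <> 0 for every a in F
   while ω^q - ω = prod_(a in F) (ω - a).  So ω^q = t - ω is the conjugate of ω,
   and x^(q+1) = N(x) for every x in Q.
   For F = F_N, N(w) = 1 and N + 1 = M p^l, u = w^M thus satisfies u^(p^l) = 1;
   if u <> 1, some v = u^(p^j) with j < l has v <> 1 = v^p, and
   (v - 1) Phi_p(v) = v^p - 1 = 0 forces Phi_p(v) = 0.  The Legendre hypothesis
   gives the irreducibility of X^2 - tX - s for the presentation of I_N(D). *)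

From HB Require Import structures.
From mathcomp Require Import all_boot all_order all_algebra all_field all_fingroup all_solvable.
From mathcomp Require Import ring.
Import Order.TTheory GRing.Theory Num.Theory.
Local Open Scope ring_scope.
Set Implicit Arguments. Unset Strict Implicit.

Section QuadraticAlgebra.
Variable R : comNzRingType.

(* (a, b) stands for a + b ω, where ω^2 = t ω + s. *)
Definition quad (t s : R) : Type := (R * R)%type.

Variables t s : R.
Local Notation Q := (quad t s).

HB.instance Definition _ := GRing.Zmodule.on Q.

Lemma quad_addE (x y : Q) : x + y = (x.1 + y.1, x.2 + y.2). Proof. by []. Qed.

Definition quad_mul (x y : Q) : Q :=
  (x.1 * y.1 + s * (x.2 * y.2), x.1 * y.2 + x.2 * y.1 + t * (x.2 * y.2)).

Fact quad_mulA : associative quad_mul.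
Proof. by case=> a b [c d] [e f]; congr pair; rewrite /=; ring. Qed.
Fact quad_mulC : commutative quad_mul.
Proof. by case=> a b [c d]; congr pair; rewrite /=; ring. Qed.
Fact quad_mul1 : left_id (1, 0) quad_mul.
Proof. by case=> a b; congr pair; rewrite /=; ring. Qed.
Fact quad_mulDl : left_distributive quad_mul +%R.
Proof. by case=> a b [c d] [e f]; congr pair; rewrite /=; ring. Qed.
Fact quad_one_neq0 : (1, 0) != 0 :> Q.
Proof. by apply/eqP => -[] /eqP; rewrite oner_eq0. Qed.

HB.instance Definition _ := GRing.Zmodule_isComNzRing.Build Q
  quad_mulA quad_mulC quad_mul1 quad_mulDl quad_one_neq0.

Lemma quad_mulE (x y : Q) :
  x * y = (x.1 * y.1 + s * (x.2 * y.2), x.1 * y.2 + x.2 * y.1 + t * (x.2 * y.2)).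
Proof. by []. Qed.

Definition quad_scale (a : R) (x : Q) : Q := (a * x.1, a * x.2).

Fact quad_scaleA a b x : quad_scale a (quad_scale b x) = quad_scale (a * b) x.
Proof. by congr pair; rewrite /= mulrA. Qed.
Fact quad_scale1 : left_id 1 quad_scale.
Proof. by case=> a b; congr pair; rewrite /= mul1r. Qed.
Fact quad_scaleDr : right_distributive quad_scale +%R.
Proof. by move=> a x y; congr pair; rewrite /= mulrDr. Qed.
Fact quad_scaleDl x : {morph quad_scale^~ x : a b / a + b}.
Proof. by move=> a b; congr pair; rewrite /= mulrDl. Qed.

HB.instance Definition _ := GRing.Zmodule_isLmodule.Build R Q
  quad_scaleA quad_scale1 quad_scaleDr quad_scaleDl.

Fact quad_scaleAl a (x y : Q) : a *: (x * y) = (a *: x) * y.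
Proof. by case: x y => [b c] [d e]; congr pair; rewrite /=; ring. Qed.

HB.instance Definition _ := GRing.Lmodule_isLalgebra.Build R Q quad_scaleAl.
HB.instance Definition _ := GRing.Lalgebra_isComAlgebra.Build R Q.

Lemma quad_scaleE a (x : Q) : a *: x = (a * x.1, a * x.2). Proof. by []. Qed.

Definition qgen : Q := (0, 1).

Lemma quad_algE a : a%:A = (a, 0) :> Q.
Proof. by rewrite quad_scaleE /= mulr1 mulr0. Qed.

Lemma quad_decomp a b : (a, b) = a%:A + b *: qgen :> Q.
Proof. by rewrite quad_algE quad_scaleE quad_addE /=; congr pair; ring. Qed.

Lemma qgen_sqr : qgen ^+ 2 = t *: qgen + s%:A.
Proof. by rewrite quad_algE expr2 quad_mulE; congr pair; rewrite /=; ring. Qed.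

Definition qconj (x : Q) : Q := (x.1 + t * x.2, - x.2).
Definition qnorm (x : Q) : R := x.1 ^+ 2 + t * x.1 * x.2 - s * x.2 ^+ 2.

Lemma mul_qconj x : x * qconj x = (qnorm x)%:A.
Proof.
by case: x => a b; rewrite quad_algE quad_mulE /qnorm; congr pair; rewrite /=; ring.
Qed.

End QuadraticAlgebra.

Section QuadraticField.
Variables (F : fieldType) (t s : F).
Hypothesis noroot : forall x : F, x ^+ 2 != t * x + s.
Local Notation Q := (quad t s).

Lemma qnorm_eq0 (x : Q) : (qnorm x == 0) = (x == 0).
Proof.
case: x => a b; apply/idP/idP => [/eqP n0 | /eqP[-> ->]]; last first.
  by apply/eqP; rewrite /qnorm /=; ring.
have [b0 | nzb] := eqVneq b 0.
  move: n0; rewrite b0 /qnorm /= !(expr0n, mulr0) subr0 addr0 => /eqP.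
  by rewrite sqrf_eq0 => /eqP ->.
have := noroot (- a / b); rewrite -subr_eq0.
have -> : (- a / b) ^+ 2 - (t * (- a / b) + s) = qnorm ((a, b) : Q) / b ^+ 2.
  by rewrite /qnorm /=; field.
by rewrite n0 mul0r eqxx.
Qed.

Lemma quad_mulf_eq0 (x y : Q) : (x * y == 0) = (x == 0) || (y == 0).
Proof.
have [-> | nzx /=] := eqVneq x 0; first by rewrite mul0r !eqxx.
apply/eqP/eqP => [xy0 | ->]; last by rewrite mulr0.
rewrite -qnorm_eq0 in nzx.
have /eqP : (qnorm x)%:A * y = 0 by rewrite -mul_qconj mulrAC xy0 mul0r.
by rewrite mulr_algl scaler_eq0 (negPf nzx) => /eqP.
Qed.

Lemma quad_lreg (x : Q) : x != 0 -> GRing.lreg x.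
Proof.
move=> nzx y z /eqP; rewrite -subr_eq0 -mulrBr quad_mulf_eq0 (negPf nzx).
by rewrite subr_eq0 => /eqP.
Qed.

End QuadraticField.

Section QuadraticFiniteField.
Variables (F : finFieldType) (t s : F).
Hypothesis noroot : forall x : F, x ^+ 2 != t * x + s.
Local Notation Q := (quad t s).
Local Notation q := #|F|.

Lemma pchar_nat_card_quad : [pchar Q].-nat q.
Proof.
have [p p_pr pcharFp] := finPcharP F.
have := abelem_pgroup (fin_ring_pchar_abelem pcharFp).
rewrite /pgroup cardsT; apply: sub_in_pnat => r _; rewrite inE => /eqP ->.
exact: rmorph_pchar (in_alg Q) _ pcharFp.
Qed.

Lemma quad_exprD_card (x y : Q) : (x + y) ^+ q = x ^+ q + y ^+ q.
Proof. exact: exprDn_pchar pchar_nat_card_quad. Qed.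

Lemma alg_expr_card (a : F) : a%:A ^+ q = a%:A :> Q.
Proof. by rewrite exprZn expr1n expf_card. Qed.

Lemma qgen_expr_card_neq : qgen t s ^+ q != qgen t s.
Proof.
have genP := congr1 (fun P => (map_poly (in_alg Q) P).[qgen t s]) (finField_genPoly F).
rewrite /= rmorphB rmorph_prod /= map_polyXn map_polyX !hornerE horner_prod in genP.
rewrite -subr_eq0 genP; apply: (big_ind (fun z : Q => z != 0)).
- exact: oner_neq0.
- by move=> y z nzy nzz; rewrite quad_mulf_eq0 // negb_or nzy.
move=> a _; rewrite map_polyXsubC hornerXsubC.
by apply/eqP => -[_] /eqP; rewrite mulr0 subr0 oner_eq0.
Qed.

Lemma qgen_expr_card : qgen t s ^+ q = t%:A - qgen t s.
Proof.
set g := qgen t s; set y := g ^+ q.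
have y_sqr : y ^+ 2 = t *: y + s%:A.
  by rewrite -exprM mulnC exprM qgen_sqr quad_exprD_card exprZn expf_card alg_expr_card.
have : (y - g) * (y - (t%:A - g)) = 0.
  have -> : (y - g) * (y - (t%:A - g)) =
      (y ^+ 2 - (t%:A * y + s%:A)) - (g ^+ 2 - (t%:A * g + s%:A)) by ring.
  by rewrite !mulr_algl y_sqr qgen_sqr !subrr.
move/eqP; rewrite quad_mulf_eq0 // !subr_eq0 (negPf qgen_expr_card_neq).
by move/eqP.
Qed.

Lemma quad_expr_card (x : Q) : x ^+ q = qconj x.
Proof.
case: x => a b; rewrite {1}quad_decomp quad_exprD_card alg_expr_card exprZn.
rewrite expf_card qgen_expr_card quad_algE !quad_scaleE quad_addE /qconj /=.
by congr pair; ring.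
Qed.

Lemma quad_expr_card_succ (x : Q) : x ^+ q.+1 = (qnorm x)%:A.
Proof. by rewrite exprS quad_expr_card mul_qconj. Qed.

End QuadraticFiniteField.

Lemma Cyclotomic_prime p : prime p -> 'Phi_p * ('X - 1) = 'X^p - 1.
Proof.
move=> p_pr; have Phi1 : 'Phi_1 = 'X - 1.
  by rewrite -(prod_Cyclotomic (ltnSn 0)) big_seq1.
have divp : perm_eq (divisors p) [:: p; 1%N].
  apply: uniq_perm; rewrite ?divisors_uniq //=.
    by rewrite inE andbT; apply: contraTneq p_pr => ->.
  move=> d; rewrite -dvdn_divisors ?prime_gt0 // !inE orbC.
  have [-> | d_neq1] := eqVneq d 1%N; first by rewrite dvd1n.
  exact: sameP (prime_nt_dvdP p_pr d_neq1) eqP.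
by rewrite -(prod_Cyclotomic (prime_gt0 p_pr)) (perm_big _ divp) big_cons big_seq1 Phi1.
Qed.

Lemma root_Cyclotomic_prime (R : comNzRingType) p (v : R) :
  prime p -> v ^+ p = 1 -> GRing.lreg (v - 1) -> root (map_poly intr 'Phi_p) v.
Proof.
move=> p_pr vp1 reg; apply/eqP/reg; rewrite mulr0.
have := congr1 (fun P => (map_poly intr P).[v]) (Cyclotomic_prime p_pr).
rewrite /= rmorphM !rmorphB /= rmorph1 map_polyX map_polyXn hornerM !hornerE.
by rewrite vp1 subrr mulrC.
Qed.

Lemma exists_ppower_of_order_p (R : nzRingType) (u : R) p l :
  u != 1 -> u ^+ (p ^ l) = 1 ->
  exists2 j, (j < l)%N & u ^+ (p ^ j) != 1 /\ u ^+ (p ^ j.+1) = 1.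
Proof.
move=> u_neq1 ul1; have ex : exists n, u ^+ (p ^ n) == 1 by exists l; apply/eqP.
case: (ex_minnP ex) => n /eqP un1 n_min; have n_le_l := n_min l (introT eqP ul1).
case: n un1 n_min n_le_l => [|j] uj1 j_min j_lt_l.
  by move: u_neq1; rewrite -[X in X != 1]/(u ^+ (p ^ 0)) uj1 eqxx.
by exists j => //; split=> //; apply/negP => /j_min; rewrite ltnn.
Qed.

Lemma quad_norm1_cyclotomic (F : finFieldType) (t s : F)
    (noroot : forall x : F, x ^+ 2 != t * x + s) (w : quad t s) M p l :
  prime p -> #|F|.+1 = (M * p ^ l)%N -> qnorm w = 1 ->
  w ^+ M = 1 \/ exists j, (j < l)%N /\ root (map_poly intr 'Phi_p) (w ^+ (M * p ^ j)).
Proof.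
move=> p_pr card_eq w_norm1.
have ul1 : (w ^+ M) ^+ (p ^ l) = 1.
  by rewrite -exprM -card_eq quad_expr_card_succ // w_norm1 scale1r.
have [-> | u_neq1] := eqVneq (w ^+ M) 1; [by left | right].
have [j j_lt_l [v_neq1 vp1]] := exists_ppower_of_order_p u_neq1 ul1.
exists j; split=> //; rewrite exprM.
apply: root_Cyclotomic_prime p_pr _ _; first by rewrite expnSr exprM in vp1.
by apply: (quad_lreg noroot); rewrite subr_eq0.
Qed.

(* I_n(D) is quad t s with ω = sqrt D, t = 0, s = D, or, when D = 1 mod 4,
   with ω = (1 + sqrt D) / 2, t = 1, s = (D - 1) / 4. *)
Definition qt (D : int) : int := if (D %% 4)%Z == 1 then 1 else 0.
Definition qs (D : int) : int := if (D %% 4)%Z == 1 then ((D - 1) %/ 4)%Z else D.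

Local Notation qD D n := (quad ((qt D)%:~R : 'Z_n) (qs D)%:~R).

Lemma qmulE D n (x y : qI n) : qmul D x y = (x : qD D n) * y.
Proof.
case: x y => [a b] [c d]; rewrite /qmul /qt /qs quad_mulE.
by case: ifP => _; congr pair; rewrite /=; ring.
Qed.

Lemma qpowE D n (x : qI n) m : qpow D x m = (x : qD D n) ^+ m.
Proof. by elim: m => [|m IHm] //; rewrite /qpow iterS -/(qpow D x m) IHm qmulE exprS. Qed.

Lemma qevalE D n (P : {poly int}) (x : qI n) :
  qeval D P x = (map_poly intr P).[x : qD D n].
Proof.
rewrite (@horner_coef_wide _ (size P)) ?size_poly //.
by apply: eq_bigr => i _; rewrite coef_map /= qpowE mulrzl.
Qed.

Lemma modz4_eq1_div (D : int) : (D %% 4)%Z == 1 ->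
  D = ((D - 1) %/ 4)%Z * 4 + 1 /\ ((1 - D) %/ 4)%Z = - ((D - 1) %/ 4)%Z.
Proof.
move=> /eqP D_mod4; set q := (D %/ 4)%Z.
have D_eq : D = q * 4 + 1 by rewrite {1}(divz_eq D 4) D_mod4.
have -> : ((D - 1) %/ 4)%Z = q by rewrite {1}D_eq addrK mulzK.
have -> : 1 - D = - q * 4 by rewrite {1}D_eq; ring.
by rewrite mulzK.
Qed.

Lemma inGE D n (x : qI n) : inG D x = (qnorm (x : qD D n) == 1).
Proof.
case: x => a b; rewrite /inG /qnorm /qt /qs /=.
by case: ifP => [/modz4_eq1_div [_ ->] | _]; rewrite ?rmorphN; congr (_ == 1); ring.
Qed.

Lemma legendre_nonsquare D N :
  prime N -> legendre D N = -1 -> forall y : 'F_N, y ^+ 2 != D%:~R.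
Proof.
move=> N_pr; rewrite /legendre; case: ifP => // _; case: existsP => // no_root _ y.
apply: contra_notN no_root => /eqP y_sqr.
have y_lt : (y < N)%N by rewrite -[X in (_ < X)%N](Fp_cast N_pr) ltn_ord.
exists (Ordinal y_lt); rewrite (dvdz_pcharf (pchar_Fp N_pr)) rmorphB rmorphXn /=.
by rewrite -[(nat_of_ord y)%:~R]/((nat_of_ord y)%:R) natr_Zp y_sqr subrr.
Qed.

Lemma qD_noroot D N : prime N -> legendre D N = -1 ->
  forall x : 'F_N, x ^+ 2 != (qt D)%:~R * x + (qs D)%:~R.
Proof.
move=> N_pr /(legendre_nonsquare N_pr) nonsq x; rewrite /qt /qs.
case: ifP => [/modz4_eq1_div [D_eq _] | _]; last by rewrite mul0r add0r.
set q := ((D - 1) %/ 4)%Z in D_eq *.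
apply: contra (nonsq (2 * x - 1)) => /eqP x_root; apply/eqP.
have -> : (2 * x - 1) ^+ 2 = 4%:R * (x ^+ 2 - x) + 1 by ring.
by rewrite x_root D_eq rmorphD rmorphM /= rmorph1; ring.
Qed.

Lemma inG_cyclotomic_dichotomy D N M p l :
  prime N -> prime p -> N.+1 = (M * p ^ l)%N -> legendre D N = -1 ->
  forall w : qI (pdiv N), inG D w ->
  qpow D w M = qone _ \/
  exists j : nat, (j < l)%N /\ qeval D 'Phi_p (qpow D w (M * p ^ j)) = 0.
Proof.
move=> N_pr p_pr N_succ leg w; rewrite inGE => /eqP w_norm1.
have card_eq : #|'F_N|.+1 = (M * p ^ l)%N by rewrite card_Fp.
have [w1 | [j [j_lt_l Phi_root]]] :=
  quad_norm1_cyclotomic (qD_noroot N_pr leg) p_pr card_eq w_norm1.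
  by left; rewrite qpowE w1.
by right; exists j; split=> //; rewrite qevalE qpowE; apply/eqP.
Qed.

Theorem theorem1p3 (D : int) (p k l cD : nat)
  (w : qI (cD * k * p ^ l).-1) :
  squarefree D -> prime p -> odd p -> (0 < k)%N -> (0 < l)%N -> (0 < cD)%N ->
  coprime (cD * k) p ->
  prime (cD * k * p ^ l).-1 -> odd (cD * k * p ^ l).-1 ->
  legendre D (cD * k * p ^ l).-1 = -1 ->
  inG D w ->
  qpow D w (cD * k) = qone _ \/
  exists j : nat, (j < l)%N /\ qeval D 'Phi_p (qpow D w (cD * k * p ^ j)) = 0.
Proof.
move=> _ p_pr _ k_gt0 _ cD_gt0 _ N_pr _ leg.
have N_succ : (cD * k * p ^ l).-1.+1 = (cD * k * p ^ l)%N.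
  by rewrite prednK // !muln_gt0 cD_gt0 k_gt0 expn_gt0 prime_gt0.
have := inG_cyclotomic_dichotomy N_pr p_pr N_succ leg.
by rewrite pdiv_id //; apply.
Qed.
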